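(* Let $w$ be analytic on the open unit disk $D=\{|z|<1\}$ and suppose $w$ has a hard singularity at a point $z_1$ with $|z_1|=1$. Then the angular derivative $w^{\cdot}(z)=izw'(z)$ also has a hard singularity at $z_1$.
   Context: An inner analytic function is one analytic on the open unit disk centered at the origin; its angular derivative is $w^{\cdot}(z)=izw'(z)$. A singular point of $w$ on the unit circle is a point where $w$ fails to be analytic; a singularity at $z_1$ on the unit circle is soft if $\lim_{z\to z_1}w(z)$ (from within the open disk) exists and is finite, and hard otherwise. *)

From HB Require Import structures.
From mathcomp Require Import all_boot all_order all_algebra.
From mathcomp Require Import complex.
From mathcomp Require Import all_classical all_reals all_analysis.
Set Implicit Arguments. Unset Strict Implicit. Unset Printing Implicit Defensive.
Import Order.TTheory GRing.Theory Num.Theory.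
Import numFieldNormedType.Exports.
Local Open Scope classical_set_scope.
Local Open Scope ring_scope.
Local Open Scope complex_scope.

(** The complex numbers, viewed as a numFieldType (hence a normed module
    over themselves, so that [derive] is the complex derivative). *)
Definition C (R : realType) : numFieldType := R[i].

Definition unit_disk (R : realType) : set (C R) := [set z | `|z| < 1].

Definition analytic_on (R : realType) (f : C R -> C R) (A : set (C R)) :=
  forall z, A z -> derivable f z 1.

Definition angular_derivative (R : realType) (w : C R -> C R) : C R -> C R :=
  fun z => (('i : R[i]) : C R) * z * (derive w z 1).

Definition regular_point (R : realType) (w : C R -> C R) (z1 : C R) :=
  exists (r : C R) (g : C R -> C R), 0 < r /\
    analytic_on g (ball z1 r) /\
    (forall z, ball z1 r z -> unit_disk z -> g z = w z).

Definition singular_point (R : realType) (w : C R -> C R) (z1 : C R) :=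
  `|z1| = 1 /\ ~ regular_point w z1.

Definition soft_singularity (R : realType) (w : C R -> C R) (z1 : C R) :=
  singular_point w z1 /\
  exists l : C R, w @ within (@unit_disk R) (nbhs z1) --> l.

Definition hard_singularity (R : realType) (w : C R -> C R) (z1 : C R) :=
  singular_point w z1 /\
  ~ (exists l : C R, w @ within (@unit_disk R) (nbhs z1) --> l).

(* If the angular derivative i z w'(z) had a finite limit at z1 from inside
   the disk, then, since |z| >= 1/2 near z1, w' would be bounded on the convex
   set D /\ B(z1, r).  By the mean value inequality w would be Lipschitz there,
   hence Cauchy as z -> z1 in D, and so convergent since C is complete; this
   contradicts the hardness of the singularity of w.  The angular derivative
   is also singular at z1: an analytic continuation of it across z1 would give
   it a finite limit there, which has just been excluded. *)

From HB Require Import structures.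
From mathcomp Require Import all_boot all_order all_algebra.
From mathcomp Require Import complex.
From mathcomp Require Import all_classical all_reals all_analysis.
From mathcomp Require Import ring lra.
Set Implicit Arguments. Unset Strict Implicit. Unset Printing Implicit Defensive.
Import Order.TTheory GRing.Theory Num.Theory.
Import numFieldNormedType.Exports.
Local Open Scope classical_set_scope.
Local Open Scope ring_scope.
Local Open Scope complex_scope.
Local Notation Re := complex.Re.
Local Notation Im := complex.Im.

Section ComplexNorm.
Variable R : realType.
Implicit Types (z u v e : C R) (k : R).

Lemma normc_Re z : `|z| = (Re `|z|)%:C.
Proof. by rewrite RRe_real ?normr_real. Qed.

Lemma Re_normc_ge0 z : 0 <= Re `|z|.
Proof. by rewrite -ler0c -normc_Re. Qed.

Lemma normcR k : `|k%:C| = `|k|%:C.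
Proof. by rewrite normc_def /= expr0n /= addr0 sqrtr_sqr. Qed.

Lemma normc_ge_Im z : `|Im z|%:C <= `|z|.
Proof.
by case: z => a b; simpc; rewrite -sqrtr_sqr ler_wsqrtr // lerDr sqr_ge0.
Qed.

Lemma ReB u v : Re (u - v) = Re u - Re v.
Proof. by case: u; case: v. Qed.

Lemma ImB u v : Im (u - v) = Im u - Im v.
Proof. by case: u; case: v. Qed.

Lemma Re_realM k z : Re (k%:C * z) = k * Re z.
Proof. by case: z => a b /=; rewrite mul0r subr0. Qed.

Lemma Re_le_normc z : (Re z)%:C <= `|z|.
Proof. by apply: le_trans (normc_ge_Re z); rewrite lecR ler_norm. Qed.

Lemma normi : `|'i| = 1 :> C R.
Proof. by rewrite normc_def /= expr0n expr1n add0r sqrtr1. Qed.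

Lemma gt0_complexE e : 0 < e -> e = (Re e)%:C /\ 0 < Re e.
Proof. by move=> e0; rewrite RRe_real ?gtr0_real //; move: e0; rewrite ltcE => /andP[]. Qed.

Lemma cvg_real_complex {T : Type} {F : set_system T} {FF : Filter F}
    {g : T -> R} {k : R} : g @ F --> k -> (fun x => (g x)%:C : C R) @ F --> (k%:C : C R).
Proof.
move=> /cvgrPdist_lt gk; apply/cvgrPdist_lt => e /gt0_complexE[-> e0].
by apply: filterS (gk _ e0) => x; rewrite -raddfB /= normcR ltcR.
Qed.

Lemma cauchy_map_contraction (f : C R -> R) (F : set_system (C R)) :
  ProperFilter F -> (forall u v, `|f u - f v|%:C <= `|u - v|) ->
  cauchy F -> cauchy (f @ F).
Proof.
move=> PF f1 /cauchyP cF; apply/cauchy_exP => e e0.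
have [u Fu] : exists u, F (ball u e%:C) by apply: cF; rewrite ltcR.
exists (f u); suff : F [set v | ball (f u) e (f v)] by [].
apply: filterS Fu => v.
rewrite -!ball_normE /ball_ /= -ltcR; exact: le_lt_trans.
Qed.

Lemma cauchy_cvg_complex (F : set_system (C R)) :
  ProperFilter F -> cauchy F -> cvg F.
Proof.
move=> PF cF.
have /cauchy_cvg cRe : cauchy ((fun z : C R => Re z) @ F).
  apply: cauchy_map_contraction cF => u v.
  by rewrite -ReB normc_ge_Re.
have /cauchy_cvg cIm : cauchy ((fun z : C R => Im z) @ F).
  apply: cauchy_map_contraction cF => u v.
  by rewrite -ImB normc_ge_Im.
apply/cvg_ex; eexists.
apply: cvg_trans (cvgD (cvg_real_complex cRe)
                       (cvgM (cvg_cst ('i : C R)) (cvg_real_complex cIm))).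
by move=> A; rewrite !nbhs_simpl /=; apply: filterS => z Az; rewrite [z]complexE.
Qed.

Lemma cvg_Re {T : Type} {F : set_system T} {FF : Filter F} {g : T -> C R} {l : C R} :
  g @ F --> l -> (fun x => Re (g x)) @ F --> Re l.
Proof.
move=> /cvgrPdist_lt gl; apply/cvgrPdist_lt => e e0.
have e0' : (0 : C R) < e%:C by rewrite ltcR.
by apply: filterS (gl _ e0') => x; rewrite -ReB -ltcR; apply: le_lt_trans (normc_ge_Re _).
Qed.

End ComplexNorm.

Section MeanValueInequality.
Variable R : realType.
Implicit Types (f : C R -> C R) (c p d : C R).

Lemma cvg_scale_dnbhs0 d : d != 0 -> (fun h : R => h%:C * d) @ 0^' --> (0 : C R)^'.
Proof.
move=> d0 A; rewrite !nbhs_simpl /= => /nbhs_ballP[e /gt0_complexE[-> e0] eA].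
have d_gt0 : 0 < Re `|d| by rewrite -ltcR -normc_Re normr_gt0.
apply/nbhs_ballP; exists (Re e / Re `|d|); first by rewrite /= divr_gt0.
move=> h; rewrite -!ball_normE /= sub0r normrN => hd h0.
apply: eA; last by rewrite mulf_neq0 // eq_complex /= negb_and h0.
rewrite -ball_normE /= sub0r normrN normrM normcR [`|d|]normc_Re -rmorphM ltcR.
by rewrite -ltr_pdivlMr.
Qed.

Lemma is_derive_Re_segment f c p d (t : R) :
  derivable f (p + t%:C * d) 1 ->
  is_derive t 1 (fun s : R => Re (c * f (p + s%:C * d)))
    (Re (c * d * 'D_1 f (p + t%:C * d))).
Proof.
set q := p + t%:C * d => fq.
have [->|d0] := eqVneq d 0.
  rewrite mulr0 mul0r.
  have -> : (fun s : R => Re (c * f (p + s%:C * 0))) = cst (Re (c * f p)).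
    by apply/funext => s; rewrite mulr0 addr0.
  exact: is_derive_cst.
have quot : (fun h : R => h^-1 *: (Re (c * f (p + (h *: 1 + t)%:C * d)) - Re (c * f q)))
    @ 0^' --> Re (c * d * 'D_1 f q).
  have := cvg_comp _ _ (cvg_scale_dnbhs0 d0) fq.
  move=> /(cvgM (cvg_cst (c * d))) /cvg_Re; apply: cvg_trans.
  (* for h <> 0 the real difference quotient is Re (c d Q(h d)), where Q is the
     complex difference quotient of f at q *)
  apply: near_eq_cvg; near=> h.
  have h0 : h%:C != 0 :> C R.
    by rewrite eq_complex /= negb_and eqxx orbF; near: h; exact: nbhs_dnbhs_neq.
  rewrite /= -[h%:A]/(h * 1) -[(h%:C * d)%:A]/(h%:C * d * 1) !mulr1.
  have -> : p + (h + t)%:C * d = h%:C * d + q by rewrite /q rmorphD /=; ring.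
  rewrite -[RHS]/(h^-1 * _) -ReB -Re_realM -[LHS]/(Re (_ * (_ * _))); congr Re.
  by rewrite fmorphV /=; field; rewrite h0 d0.
apply: DeriveDef; last exact: cvg_lim.
by apply/cvg_ex; exists (Re (c * d * 'D_1 f q)).
Unshelve. all: by end_near.
Qed.

Lemma mean_value_ineq f (S : set (C R)) (M : R) (a b : C R) :
  (forall t : R, 0 <= t <= 1 -> S (a + t%:C * (b - a))) ->
  (forall z, S z -> derivable f z 1) ->
  (forall z, S z -> `|'D_1 f z| <= M%:C) ->
  `|f b - f a| <= M%:C * `|b - a|.
Proof.
move=> Sab fS MS; set x := f b - f a; set d := b - a.
have S01 t : t \in `[0, 1] -> S (a + t%:C * d) by rewrite in_itv; exact: Sab.
(* the real MVT for t |-> Re (x^* f (a + t d)), whose increment on [0, 1] is |x|^2 *)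
have [] := @MVT _ (fun t => Re (x^* * f (a + t%:C * d)))
  (fun t => Re (x^* * d * 'D_1 f (a + t%:C * d))) 0 1 ltr01.
- move=> t t01; apply/is_derive_Re_segment/fS/S01.
  exact: subset_itv_oo_cc.
- apply: derivable_within_continuous => t t01.
  by have [] := is_derive_Re_segment x^* (fS _ (S01 _ t01)).
move=> xi xi01.
rewrite subr0 mulr1 rmorph0 rmorph1 mul0r mul1r addr0 subrKC -ReB -mulrBr mulrC -/x.
move=> Re_xx.
have M_ge0 : 0 <= M%:C.
  by apply: le_trans (MS _ (S01 0 _)); rewrite // in_itv /= lexx ler01.
have [->|x0] := eqVneq x 0; first by rewrite normr0 mulr_ge0.
have x_gt0 : 0 < `|x| by rewrite normr_gt0.
rewrite -(ler_pM2l x_gt0) -expr2 sqr_normc -(RRe_real (ger0_real (mulcJ_ge0 x))) Re_xx.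
apply: le_trans (Re_le_normc _) _.
rewrite !normrM normcJ -mulrA [M%:C * _]mulrC.
do 2 apply: ler_wpM2l => //.
by apply/MS/S01/subset_itv_oo_cc.
Qed.

End MeanValueInequality.

Section DiskGeometry.
Variable R : realType.
Implicit Types (z a b r : C R) (t : R).

Lemma convex_ball z r a b t : ball z r a -> ball z r b -> 0 <= t <= 1 ->
  ball z r (a + t%:C * (b - a)).
Proof.
rewrite -!ball_normE /= => za zb /andP[t_ge0].
rewrite -subr_ge0 => t_le1.
have -> : z - (a + t%:C * (b - a)) = (1 - t)%:C * (z - a) + t%:C * (z - b).
  by rewrite rmorphB /=; ring.
have [->|t_gt0] := eqVneq t 0; first by rewrite subr0 !mul1r mul0r addr0.
have {}t_gt0 : 0 < t%:C :> C R by rewrite ltcR lt_def t_gt0.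
apply: le_lt_trans (ler_normD _ _) _.
rewrite !normrM !normcR (ger0_norm t_ge0) (ger0_norm t_le1).
have -> : r = (1 - t)%:C * r + t%:C * r by rewrite -mulrDl -rmorphD subrK rmorph1 mul1r.
by apply: ler_ltD; [apply: ler_wpM2l; [rewrite ler0c | exact: ltW] | rewrite ltr_pM2l].
Qed.

Lemma unit_diskE : @unit_disk R = ball 0 1.
Proof. by apply/funext => z; rewrite -ball_normE /= sub0r normrN. Qed.

Lemma closure_unit_disk z : `|z| = 1 -> closure (@unit_disk R) z.
Proof.
move=> z1 B /nbhs_ballP[e /gt0_complexE[-> e_gt0] eB].
set s := Re e / (Re e + 1).
have s_gt0 : 0 < s by rewrite divr_gt0 // addr_gt0.
have s_lt1 : s < 1 by rewrite ltr_pdivrMr ?addr_gt0 // mul1r ltrDl.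
have s_lt_e : s < Re e by rewrite ltr_pdivrMr ?addr_gt0 // ltr_pMr // ltrDr.
exists ((1 - s)%:C * z); split.
  by rewrite /unit_disk /= normrM z1 mulr1 normcR ltcR gtr0_norm ?subr_gt0 // ltrBlDr ltrDl.
apply: eB; rewrite -ball_normE /=.
have -> : z - (1 - s)%:C * z = s%:C * z by rewrite rmorphB /= rmorph1; ring.
by rewrite normrM z1 mulr1 normcR ltcR gtr0_norm.
Qed.

End DiskGeometry.

Section LipschitzLimit.
Variables (R : realType) (f : C R -> C R) (A : set (C R)) (z1 : C R) (r M : R).
Hypothesis z1_closure : closure A z1.
Hypothesis r_gt0 : 0 < r.
Hypothesis f_lipschitz : forall u v, A u -> ball z1 r%:C u -> A v -> ball z1 r%:C v ->
  `|f u - f v| <= M%:C * `|u - v|.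

Lemma cvg_within_lipschitz : cvg (f @ within A (nbhs z1)).
Proof.
have PF : ProperFilter (within A (nbhs z1)) by exact: within_nbhs_proper.
apply: cauchy_cvg_complex; apply/cauchy_exP => e /gt0_complexE[-> e_gt0].
set rho := Num.min r (Re e / (2 * `|M| + 1)).
have rho_gt0 : 0 < rho by rewrite lt_min r_gt0 divr_gt0 // ltr_wpDl ?mulr_ge0.
have rho_le_r : ball z1 rho%:C `<=` ball z1 r%:C.
  by apply: le_ball; rewrite lecR ge_min lexx.
have rho_e : `|M| * (2 * rho) < Re e.
  have : rho * (2 * `|M| + 1) <= Re e.
    by rewrite -ler_pdivlMr ?ltr_wpDl ?mulr_ge0 // ge_min lexx orbT.
  lra.
have [a [Aa ra]] : A `&` ball z1 rho%:C !=set0.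
  by apply: z1_closure; apply: nbhsx_ballx; rewrite ltcR.
exists (f a); suff : \forall z \near within A (nbhs z1), ball (f a) (Re e)%:C (f z) by [].
rewrite near_withinE; apply/nbhs_ballP; exists rho%:C; first by rewrite /= ltcR.
move=> z rz Az; rewrite -ball_normE /=.
apply: le_lt_trans (f_lipschitz Aa (rho_le_r _ ra) Az (rho_le_r _ rz)) _.
apply: le_lt_trans (_ : `|M|%:C * (2 * rho)%:C < _); last by rewrite -rmorphM ltcR.
apply: le_trans (ler_wpM2r (normr_ge0 _) (_ : M%:C <= `|M|%:C)) _; first by rewrite lecR ler_norm.
apply: ler_wpM2l; first by rewrite ler0c.
apply: le_trans (ler_distD z1 _ _) _; rewrite distrC.
move: ra rz; rewrite -!ball_normE /= => ra rz.
by rewrite mulr_natl mulr2n rmorphD /=; apply: lerD; apply: ltW.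
Qed.

End LipschitzLimit.

Section BoundedDerivative.
Variables (R : realType) (f : C R -> C R) (A : set (C R)) (z1 : C R) (M : R).
Hypothesis A_convex :
  forall a b (t : R), A a -> A b -> 0 <= t <= 1 -> A (a + t%:C * (b - a)).
Hypothesis z1_closure : closure A z1.
Hypothesis f'_bounded :
  \forall z \near within A (nbhs z1), derivable f z 1 /\ `|'D_1 f z| <= M%:C.

Lemma cvg_within_bounded_derive : cvg (f @ within A (nbhs z1)).
Proof.
move: f'_bounded; rewrite near_withinE => /nbhs_ballP[r /gt0_complexE[rE r_gt0]].
rewrite rE => f'r.
apply: (@cvg_within_lipschitz _ _ _ _ _ M z1_closure r_gt0) => u v Au ru Av rv.
apply: (@mean_value_ineq _ _ (fun z => A z /\ ball z1 (Re r)%:C z)).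
- by move=> t t01; split; [apply: A_convex | apply: convex_ball].
- by move=> z [Az rz]; have [] := f'r _ rz Az.
- by move=> z [Az rz]; have [] := f'r _ rz Az.
Qed.

End BoundedDerivative.

Section AngularDerivative.
Variables (R : realType) (w : C R -> C R) (z1 : C R).
Hypothesis z1_circle : `|z1| = 1.

Lemma cvg_angular_derivative_bounded (l : C R) :
  angular_derivative w @ within (@unit_disk R) (nbhs z1) --> l ->
  exists M : R, \forall z \near within (@unit_disk R) (nbhs z1), `|'D_1 w z| <= M%:C.
Proof.
move=> /cvgrPdist_lt /(_ 1 ltr01) near_l; exists (2 * (Re `|l| + 1)).
near=> z.
have z1z : Re `|z1 - z| < 2^-1.
  rewrite -ltcR -normc_Re; near: z; rewrite near_withinE.
  have : nbhs z1 (ball z1 (2^-1)%:C) by apply: nbhsx_ballx; rewrite ltcR invr_gt0 ltr0n.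
  by rewrite -ball_normE; apply: filterS => z + _.
have z_large : 1 <= Re `|z| + Re `|z1 - z|.
  by rewrite -lecR rmorph1 rmorphD /= -!normc_Re -z1_circle -{1}(subrKC z z1) ler_normD.
have zD : Re `|z| * Re `|'D_1 w z| <= Re `|l| + 1.
  rewrite -lecR rmorphM rmorphD rmorph1 /= -!normc_Re.
  have -> : `|z| * `|'D_1 w z| = `|'i * z * 'D_1 w z| by rewrite !normrM normi mul1r.
  have := ler_normB l (l - 'i * z * 'D_1 w z); rewrite subKr => /le_trans; apply.
  by apply: lerD => //; apply: ltW; near: z.
rewrite [`|'D_1 w z|]normc_Re lecR.
have := Re_normc_ge0 z; have := Re_normc_ge0 ('D_1 w z); nra.
Unshelve. all: by end_near.
Qed.

Lemma cvg_of_cvg_angular_derivative : analytic_on w (@unit_disk R) ->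
  (exists l : C R, angular_derivative w @ within (@unit_disk R) (nbhs z1) --> l) ->
  exists l : C R, w @ within (@unit_disk R) (nbhs z1) --> l.
Proof.
move=> w_analytic [l /cvg_angular_derivative_bounded[M w'_bounded]].
apply/cvg_ex; apply: (@cvg_within_bounded_derive _ _ _ _ M).
- by rewrite unit_diskE; exact: convex_ball.
- exact: closure_unit_disk.
- near=> z; split; last by near: z.
  by apply: w_analytic; near: z; exact: withinT.
Unshelve. all: by end_near.
Qed.

End AngularDerivative.

Lemma regular_point_cvg (R : realType) (f : C R -> C R) (z1 : C R) :
  regular_point f z1 -> exists l : C R, f @ within (@unit_disk R) (nbhs z1) --> l.
Proof.
move=> [r [g [r_gt0 [g_analytic gf]]]]; exists (g z1).
have /derivable1_diffP/differentiable_continuous g_cont := g_analytic _ (ballxx z1 r_gt0).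
apply: cvg_trans (cvg_within_filter _ g_cont); apply: near_eq_cvg.
by rewrite near_withinE; apply/nbhs_ballP; exists r => // z rz Dz; rewrite gf.
Qed.

Theorem mainTheorem9 (R : realType) (w : C R -> C R) (z1 : C R) :
  analytic_on w (@unit_disk R) ->
  hard_singularity w z1 ->
  hard_singularity (angular_derivative w) z1.
Proof.
move=> w_analytic [[z1_circle _] no_limit].
have no_angular_limit :
    ~ exists l : C R, angular_derivative w @ within (@unit_disk R) (nbhs z1) --> l.
  by move/(cvg_of_cvg_angular_derivative z1_circle w_analytic).
by split=> //; split=> // /regular_point_cvg.
Qed.
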